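(* For all $\vec z,\vec a\in\mathbb{C}^n$ (with $d_{\tan}$ possibly $+\infty$), \[ \tfrac12\big\||\pi_{\vec z}\rangle\langle\pi_{\vec z}|-|\pi_{\vec a}\rangle\langle\pi_{\vec a}|\big\|_1=\big\||\pi_{\vec z}\rangle\langle\pi_{\vec z}|-|\pi_{\vec a}\rangle\langle\pi_{\vec a}|\big\|_{\mathrm{op}}\le d_{\tan}(|\pi_{\vec z}\rangle,|\pi_{\vec a}\rangle). \]
   Context: For $\vec z\in\mathbb{C}^n$, $|\pi_{\vec z}\rangle=\bigotimes_{i=1}^n \frac{|0\rangle+z_i|1\rangle}{\sqrt{1+|z_i|^2}}$; the tangent distance is $d_{\tan}(|\pi_{\vec z}\rangle,|\pi_{\vec a}\rangle)=\big(\sum_{i=1}^n|\frac{z_i-a_i}{1+z_i^*a_i}|^2\big)^{1/2}$ (a summand with vanishing denominator is $+\infty$). $\|\cdot\|_1$ is the trace norm and $\|\cdot\|_{\mathrm{op}}$ the operator norm. *)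

From HB Require Import structures.
From mathcomp Require Import all_boot all_order all_algebra.
From mathcomp Require Import spectral sesquilinear.
From mathcomp Require Import complex.
From mathcomp Require Import classical_sets reals constructive_ereal.
Set Implicit Arguments. Unset Strict Implicit. Unset Printing Implicit Defensive.
Import Order.TTheory GRing.Theory Num.Theory.
Local Open Scope ring_scope.
Local Open Scope classical_set_scope.

Section Defs.
Variable R : realType.
Local Notation C := (R[i]).

Definition cabs2 (x : C) : R := complex.Re (x * x^*).

Definition qubit_amp (z : C) (b : bool) : C :=
  (if b then z else 1) / (Num.sqrt (1 + cabs2 z))%:C%C.

(* |pi_z> = tensor_{i<n} (|0> + z_i|1>)/sqrt(1+|z_i|^2), as a column vector
   in C^(2^n); the computational basis vector with index k (0 <= k < 2^n)
   corresponds to the bit string whose i-th bit is the i-th binary digit of k. *)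
Definition pistate n (z : 'I_n -> C) : 'cV[C]_(2 ^ n) :=
  \col_(k < 2 ^ n) \prod_(i < n) qubit_amp (z i) (odd (k %/ 2 ^ i)).

Definition proj_of N (v : 'cV[C]_N) : 'M[C]_N := v *m (map_mx Num.conj v)^T.

Definition vnorm N (v : 'cV[C]_N) : R := Num.sqrt (\sum_(i < N) cabs2 (v i 0)).

Definition opnorm N (A : 'M[C]_N) : R :=
  sup [set vnorm (A *m v) | v in [set v : 'cV[C]_N | vnorm v = 1]].

(* trace norm: sum of the singular values of A, i.e. of the square roots of
   the eigenvalues (with multiplicity) of the Hermitian matrix A^* A *)
Definition tracenorm N (A : 'M[C]_N) : R :=
  \sum_(i < N) complex.Re (sqrtC (spectral_diag ((map_mx Num.conj A)^T *m A) 0 i)).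

Definition dtan n (z a : 'I_n -> C) : \bar R :=
  if [exists i, 1 + (z i)^* * a i == 0] then +oo%E
  else (Num.sqrt (\sum_(i < n) cabs2 ((z i - a i) / (1 + (z i)^* * a i))))%:E.

End Defs.

Set Warnings "-notation-overridden,-ambiguous-paths".
From HB Require Import structures.
From mathcomp Require Import all_boot all_order all_algebra.
From mathcomp Require Import spectral sesquilinear complex.
From mathcomp Require Import classical_sets reals constructive_ereal.
From mathcomp Require Import ring lra.
Import Order.TTheory GRing.Theory Num.Theory.
Set Implicit Arguments. Unset Strict Implicit. Unset Printing Implicit Defensive.
Local Open Scope complex_scope.
Local Open Scope ring_scope.

(* For unit vectors u, v with overlap c = <u|v>, the difference
   D = |u><u| - |v><v| maps u to u - c^* v and v to c u - v, so D^2 is the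
   scalar 1 - |c|^2 on span(u, v) and vanishes on its orthogonal complement.
   Hence the Gram matrix E = D^* D = D^2 satisfies E^2 = (1 - |c|^2) E: every
   nonzero singular value of D equals sqrt (1 - |c|^2), there are two of them
   since tr E = 2 (1 - |c|^2), and u attains the operator norm.  For product
   states the overlap factorises as |c|^2 = prod_i p_i, where
   1 - p_i <= |(z_i - a_i) / (1 + z_i^* a_i)|^2, and 1 - prod_i p_i <=
   sum_i (1 - p_i) for p_i in [0, 1]. *)

Local Notation adjm A := ((map_mx Num.conj A)^T).

Section ComplexModulus.
Variable R : realType.
Local Notation C := (R[i]).
Implicit Types (x y z a : C).

Lemma conj_realc (r : R) : (r%:C)^* = r%:C :> C.
Proof. exact: conjc_real. Qed.

Lemma cabs2C x : (cabs2 x)%:C = x * x^*.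
Proof.
rewrite /cabs2; case: x => p q /=.
by rewrite /real_complex_def; congr Complex => /=; ring.
Qed.

Lemma one_sub_cabs2C x : (1 - cabs2 x)%:C = 1 - x^* * x.
Proof. by rewrite rmorphB /= cabs2C mulrC. Qed.

Lemma cabs2_ge0 x : 0 <= cabs2 x.
Proof. by rewrite /cabs2; case: x => p q /=; nra. Qed.

Lemma cabs2_eq0 x : (cabs2 x == 0) = (x == 0).
Proof.
apply/eqP/eqP => [|->]; last by rewrite /cabs2 /=; ring.
rewrite /cabs2; case: x => p q /= h.
have -> : p = 0 by nra.
by have -> : q = 0 by nra.
Qed.

Lemma cabs2M x y : cabs2 (x * y) = cabs2 x * cabs2 y.
Proof. by apply: (@complexI R); rewrite rmorphM /= !cabs2C rmorphM /=; ring. Qed.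

Lemma cabs2V x : cabs2 x^-1 = (cabs2 x)^-1.
Proof.
have [->|x_neq0] := eqVneq x 0; first by rewrite invr0 /cabs2 mul0r invr0.
have cx_neq0 : cabs2 x != 0 by rewrite cabs2_eq0.
apply: (mulIf cx_neq0); rewrite -cabs2M !mulVf //.
by rewrite /cabs2 mul1r /=; ring.
Qed.

Lemma cabs2_real (r : R) : cabs2 r%:C = r ^+ 2.
Proof. by rewrite /cabs2 /=; ring. Qed.

Lemma cabs2_prod n (f : 'I_n -> C) : cabs2 (\prod_i f i) = \prod_i cabs2 (f i).
Proof.
apply: (@complexI R); rewrite rmorph_prod cabs2C rmorph_prod -big_split.
by apply: eq_bigr => i _ /=; rewrite cabs2C.
Qed.

(* Hence the single-qubit infidelity is |z - a|^2 / ((1 + |z|^2) (1 + |a|^2)). *)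
Lemma cabs2_1DconjM_add_sub z a :
  cabs2 (1 + z^* * a) + cabs2 (z - a) = (1 + cabs2 z) * (1 + cabs2 a).
Proof. by rewrite /cabs2; case: z => z1 z2; case: a => a1 a2 /=; ring. Qed.

End ComplexModulus.

Lemma sum_binary_digits_prod (T : comNzRingType) n (f : 'I_n -> bool -> T) :
  \sum_(k < 2 ^ n) \prod_(i < n) f i (odd (k %/ 2 ^ i)) =
  \prod_(i < n) (f i false + f i true).
Proof.
elim: n f => [|n IH] f; first by rewrite big_ord1 !big_ord0.
rewrite big_ord_recr /= -(IH (fun i => f (widen_ord (leqnSn n) i))).
rewrite -(big_mkord xpredT (fun k => \prod_(i < n.+1) f i (odd (k %/ 2 ^ i)))).
rewrite expnS mul2n -addnn (big_cat_nat _ (leq_addr _ _)) //=.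
rewrite (big_addn 0 (2 ^ n + 2 ^ n) (2 ^ n)) addnK mulrDr !big_mkord.
congr (_ + _); rewrite mulr_suml; apply: eq_bigr => k _; rewrite big_ord_recr /=.
  by rewrite divn_small ?ltn_ord.
congr (_ * _); last by rewrite -{2}(mul1n (2 ^ n)%N) divnDMl ?expn_gt0 // divn_small.
apply: eq_bigr => i _; congr (f _ _).
have e : (2 ^ n = 2 ^ (n - i) * 2 ^ i)%N by rewrite -expnD subnK // ltnW.
rewrite [X in ((_ + X) %/ _)%N]e divnDMl ?expn_gt0 // oddD oddX.
by rewrite subn_eq0 leqNgt ltn_ord /= addbF.
Qed.

Section Adjoint.
Variable C : numClosedFieldType.

Lemma adjmK m n (A : 'M[C]_(m, n)) : adjm (adjm A) = A.
Proof. by apply/matrixP => i j; rewrite !mxE conjCK. Qed.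

Lemma adjmM m n p (A : 'M[C]_(m, n)) (B : 'M[C]_(n, p)) :
  adjm (A *m B) = adjm B *m adjm A.
Proof. by rewrite map_mxM trmx_mul. Qed.

Lemma adjmB m n (A B : 'M[C]_(m, n)) : adjm (A - B) = adjm A - adjm B.
Proof. by apply/matrixP => i j; rewrite !mxE rmorphB. Qed.

Lemma self_adjoint_normalmx n (A : 'M[C]_n) : adjm A = A -> A \is normalmx.
Proof. by move=> adjA; rewrite qualifE -map_trmx adjA. Qed.

Lemma sum_spectral_diag n (E : 'M[C]_n) :
  E \is normalmx -> \sum_i spectral_diag E 0 i = \tr E.
Proof.
move=> /orthomx_spectralP E_diag; have Pu := spectral_unit E.
by rewrite [in RHS]E_diag mxtrace_mulC mulmxA (mulmxV Pu) mul1mx mxtrace_diag.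
Qed.

Lemma spectral_diag_quasi_idem n (E : 'M[C]_n) c :
  E \is normalmx -> E *m E = c *: E ->
  forall i, spectral_diag E 0 i = 0 \/ spectral_diag E 0 i = c.
Proof.
move=> /orthomx_spectralP E_diag EE i; have Pu := spectral_unit E.
set P := spectralmx E in E_diag Pu; set d := spectral_diag E in E_diag *.
have diagE : diag_mx d = P *m E *m invmx P.
  by rewrite E_diag !mulmxA (mulmxV Pu) mul1mx (mulmxK Pu).
have : diag_mx d *m diag_mx d = c *: diag_mx d.
  by rewrite diagE !mulmxA (mulmxKV Pu) -(mulmxA _ E E) EE -scalemxAr -scalemxAl.
move=> /matrixP /(_ i i); rewrite mul_diag_mx !mxE eqxx mulr1n => /eqP.
rewrite -subr_eq0 -mulrBl mulf_eq0 subr_eq0 => /orP[] /eqP ->; by [right|left].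
Qed.

End Adjoint.

Section InnerProduct.
Variable R : realType.
Local Notation C := (R[i]).

Definition cdot N (x y : 'cV[C]_N) : C := (adjm x *m y) 0 0.

Definition nrm2 N (x : 'cV[C]_N) : R := \sum_i cabs2 (x i 0).

Variable N : nat.
Implicit Types (x y w : 'cV[C]_N) (a : C).

Lemma cdotC x y : cdot y x = (cdot x y)^*.
Proof.
rewrite /cdot !mxE rmorph_sum; apply: eq_bigr => i _.
by rewrite !mxE rmorphM /= conjCK mulrC.
Qed.

Lemma cdot_self x : cdot x x = (nrm2 x)%:C.
Proof.
rewrite /cdot !mxE rmorph_sum; apply: eq_bigr => i _ /=.
by rewrite !mxE cabs2C mulrC.
Qed.

Lemma nrm2_ge0 x : 0 <= nrm2 x.
Proof. by apply: sumr_ge0 => i _; apply: cabs2_ge0. Qed.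

Lemma cdotBr w x y : cdot w (x - y) = cdot w x - cdot w y.
Proof. by rewrite /cdot mulmxBr !mxE. Qed.

Lemma cdotZr w a x : cdot w (a *: x) = a * cdot w x.
Proof. by rewrite /cdot -scalemxAr !mxE. Qed.

Lemma cdotBl w x y : cdot (x - y) w = cdot x w - cdot y w.
Proof. by rewrite cdotC cdotBr rmorphB /= -!cdotC. Qed.

Lemma cdotZl w a x : cdot (a *: x) w = a^* * cdot x w.
Proof. by rewrite cdotC cdotZr rmorphM /= -cdotC. Qed.

Lemma cdot_mulmxl (A : 'M[C]_N) x y : cdot (A *m x) y = cdot x (adjm A *m y).
Proof. by rewrite /cdot adjmM mulmxA. Qed.

Lemma mulmx_outer x y w : x *m adjm y *m w = cdot y w *: x.
Proof. by rewrite -mulmxA [adjm y *m w]mx11_scalar mul_mx_scalar. Qed.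

Lemma mxtrace_outer x y : \tr (x *m adjm y) = cdot y x.
Proof. by rewrite mxtrace_mulC /mxtrace big_ord1. Qed.

Lemma vnormE x : vnorm x = Num.sqrt (nrm2 x).
Proof. by []. Qed.

Lemma vnorm_eq1 x : (vnorm x = 1) <-> (nrm2 x = 1).
Proof.
rewrite vnormE; split=> [unit_x|->]; last exact: sqrtr1.
by rewrite -[nrm2 x]sqr_sqrtr ?nrm2_ge0 // unit_x expr1n.
Qed.

Lemma opnorm_attained (A : 'M[C]_N) u :
  vnorm u = 1 -> (forall w, vnorm w = 1 -> vnorm (A *m w) <= vnorm (A *m u)) ->
  opnorm A = vnorm (A *m u).
Proof.
move=> u_unit u_max; apply/eqP; rewrite eq_le; apply/andP; split.
  by apply: ge_sup; [exists (vnorm (A *m u)), u | move=> _ [w /u_max le_w <-]].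
by apply: ub_le_sup; [exists (vnorm (A *m u)) => _ [w /u_max le_w <-] | exists u].
Qed.

End InnerProduct.

Section QuasiIdempotentGram.
Variables (R : realType) (N : nat) (A : 'M[R[i]]_N) (l : R).
Local Notation E := (adjm A *m A).
Hypotheses (l_ge0 : 0 <= l) (gramE : E *m E = l%:C *: E).

Lemma nrm2_mul_unit_le w : nrm2 w = 1 -> nrm2 (A *m w) <= l.
Proof.
move=> w_unit; set x := nrm2 (A *m w); set y := E *m w.
have wy : cdot w y = x%:C by rewrite /y -mulmxA -cdot_mulmxl cdot_self.
have yw : cdot y w = x%:C by rewrite cdotC wy conj_realc.
have yy : cdot y y = (l * x)%:C.
  by rewrite {1}/y cdot_mulmxl adjmM adjmK /y mulmxA gramE -scalemxAl cdotZr wy rmorphM.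
have dist_yw : nrm2 (y - x%:C *: w) = x * (l - x).
  apply: (@complexI R); rewrite -cdot_self !cdotBl !cdotBr !cdotZl !cdotZr.
  rewrite wy yw yy cdot_self w_unit conj_realc -!rmorphM -!rmorphB; congr _%:C; ring.
have := nrm2_ge0 (y - x%:C *: w); rewrite dist_yw => dist_ge0.
rewrite leNgt; apply/negP => lt_lx.
suff : x * (l - x) < 0 by rewrite ltNge dist_ge0.
by rewrite pmulr_rlt0 ?subr_lt0 // (le_lt_trans l_ge0 lt_lx).
Qed.

Lemma tracenorm_gram_quasi_idem k :
  \tr E = (k%:R * l)%:C -> tracenorm A = k%:R * Num.sqrt l.
Proof.
move=> trE; rewrite /tracenorm.
have normalE : E \is normalmx by apply: self_adjoint_normalmx; rewrite adjmM adjmK.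
have d_cases := spectral_diag_quasi_idem normalE gramE.
have sum_d := sum_spectral_diag normalE; rewrite trE in sum_d.
set d := spectral_diag E in d_cases sum_d *.
have [l0|l_neq0] := eqVneq l 0.
  rewrite l0 sqrtr0 mulr0; apply: big1 => i _.
  by case: (d_cases i) => ->; rewrite ?l0 sqrtC0.
have sl_neq0 : Num.sqrt l != 0 by rewrite sqrtr_eq0 -ltNge lt_def l_neq0.
apply: (mulIf sl_neq0); rewrite mulr_suml -mulrA -expr2 sqr_sqrtr //.
have sqrtC_l : sqrtC l%:C = (Num.sqrt l)%:C.
  by rewrite -[in LHS](sqr_sqrtr l_ge0) rmorphXn sqrCK // ler0c sqrtr_ge0.
transitivity (complex.Re (\sum_i d 0 i)); last by rewrite sum_d.
rewrite raddf_sum; apply: eq_bigr => i _.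
by case: (d_cases i) => ->; rewrite ?sqrtC0 ?mul0r // sqrtC_l /= -expr2 sqr_sqrtr.
Qed.

End QuasiIdempotentGram.

Section ProjectorDifference.
Variables (R : realType) (N : nat) (u v : 'cV[R[i]]_N).
Hypotheses (unit_u : cdot u u = 1) (unit_v : cdot v v = 1).
Local Notation c := (cdot u v).
Local Notation D := (proj_of u - proj_of v).

Lemma adjm_proj_diff : adjm D = D.
Proof. by rewrite adjmB !adjmM !adjmK. Qed.

Lemma proj_diff_mul_u : D *m u = u - c^* *: v.
Proof. by rewrite mulmxBl !mulmx_outer unit_u scale1r [cdot v u]cdotC. Qed.

Lemma proj_diff_mul_v : D *m v = c *: u - v.
Proof. by rewrite mulmxBl !mulmx_outer unit_v scale1r. Qed.

Lemma proj_diff_sqr_mul_u : D *m (D *m u) = (1 - cabs2 c)%:C *: u.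
Proof.
rewrite proj_diff_mul_u mulmxBr -scalemxAr proj_diff_mul_u proj_diff_mul_v.
by rewrite one_sub_cabs2C; apply/matrixP => i j; rewrite !mxE; ring.
Qed.

Lemma proj_diff_sqr_mul_v : D *m (D *m v) = (1 - cabs2 c)%:C *: v.
Proof.
rewrite proj_diff_mul_v mulmxBr -scalemxAr proj_diff_mul_u proj_diff_mul_v.
by rewrite one_sub_cabs2C; apply/matrixP => i j; rewrite !mxE; ring.
Qed.

Lemma proj_diff_cube : D *m (D *m D) = (1 - cabs2 c)%:C *: D.
Proof.
have DD_proj x : D *m (D *m proj_of x) = D *m (D *m x) *m adjm x.
  by rewrite /proj_of !mulmxA.
rewrite (mulmxBr D (proj_of u)) mulmxBr !DD_proj.
by rewrite proj_diff_sqr_mul_u proj_diff_sqr_mul_v -!scalemxAl -scalerBr.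
Qed.

Lemma gram_proj_diff :
  adjm D *m D *m (adjm D *m D) = (1 - cabs2 c)%:C *: (adjm D *m D).
Proof. by rewrite adjm_proj_diff -mulmxA proj_diff_cube -scalemxAr. Qed.

Lemma mxtrace_gram_proj_diff : \tr (adjm D *m D) = (2%:R * (1 - cabs2 c))%:C.
Proof.
rewrite adjm_proj_diff {2}/proj_of mulmxBr !mulmxA mxtraceD raddfN /= !mxtrace_outer.
rewrite proj_diff_mul_u proj_diff_mul_v !cdotBr !cdotZr unit_u unit_v.
by rewrite [cdot v u]cdotC rmorphM /= rmorph_nat one_sub_cabs2C; ring.
Qed.

Lemma nrm2_proj_diff_mul_u : nrm2 (D *m u) = 1 - cabs2 c.
Proof.
apply: (@complexI R).
by rewrite -cdot_self cdot_mulmxl adjm_proj_diff proj_diff_sqr_mul_u cdotZr unit_u mulr1.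
Qed.

Lemma one_sub_cabs2_cdot_ge0 : 0 <= 1 - cabs2 c.
Proof. by rewrite -nrm2_proj_diff_mul_u nrm2_ge0. Qed.

Lemma opnorm_proj_diff : opnorm D = Num.sqrt (1 - cabs2 c).
Proof.
have nrm2_u : nrm2 u = 1 by apply: (@complexI R); rewrite -cdot_self.
rewrite -nrm2_proj_diff_mul_u -vnormE; apply: opnorm_attained; first exact/vnorm_eq1.
move=> w /vnorm_eq1 unit_w; rewrite !vnormE ler_sqrt ?nrm2_ge0 //.
rewrite nrm2_proj_diff_mul_u.
exact: nrm2_mul_unit_le one_sub_cabs2_cdot_ge0 gram_proj_diff _ unit_w.
Qed.

Lemma tracenorm_proj_diff : tracenorm D = 2%:R * Num.sqrt (1 - cabs2 c).
Proof.
exact: tracenorm_gram_quasi_idem one_sub_cabs2_cdot_ge0 gram_proj_diff _ mxtrace_gram_proj_diff.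
Qed.

End ProjectorDifference.

Lemma one_sub_prod_le_sum (R : realFieldType) n (p q : 'I_n -> R) :
  (forall i, 0 <= p i <= 1) -> (forall i, 1 - p i <= q i) ->
  1 - \prod_i p i <= \sum_i q i.
Proof.
elim: n p q => [|n IH] p q p01 le_pq; first by rewrite !big_ord0 subrr.
rewrite big_ord_recr [\sum_(i < n.+1) _]big_ord_recr /=.
set P := \prod_(i < n) _.
have P_ge0 : 0 <= P by apply: prodr_ge0 => i _; case/andP: (p01 (widen_ord (leqnSn n) i)).
have P_le1 : P <= 1 by apply: prodr_ile1 => i _; exact: p01.
have := IH _ (fun i => q (widen_ord (leqnSn n) i)) (fun i => p01 _) (fun i => le_pq _).
have := le_pq ord_max; case/andP: (p01 ord_max); rewrite -/P.
nra.
Qed.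

Section ProductStates.
Variable R : realType.
Local Notation C := (R[i]).
Implicit Types (x y z a : C).

Local Notation qnorm z := (Num.sqrt (1 + cabs2 z)).

Lemma qnorm_gt0 x : 0 < qnorm x.
Proof. by rewrite sqrtr_gt0; have := cabs2_ge0 x; lra. Qed.

Lemma qnormC_neq0 x : (qnorm x)%:C != 0.
Proof. by rewrite (inj_eq (@complexI R)) gt_eqF ?qnorm_gt0. Qed.

Lemma qnormC_sqr x : (qnorm x)%:C * (qnorm x)%:C = 1 + x * x^*.
Proof.
rewrite -rmorphM /= -expr2 sqr_sqrtr; last by have := cabs2_ge0 x; lra.
by rewrite rmorphD /= cabs2C.
Qed.

Lemma qubit_amp_cdot z a :
  (qubit_amp z false)^* * qubit_amp a false + (qubit_amp z true)^* * qubit_amp a true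
  = (1 + z^* * a) / ((qnorm z)%:C * (qnorm a)%:C).
Proof.
rewrite /qubit_amp !fmorph_div /= !conj_realc rmorph1.
by field; rewrite !qnormC_neq0.
Qed.

Lemma pistate_cdot n (z a : 'I_n -> C) :
  cdot (pistate z) (pistate a) =
  \prod_i ((1 + (z i)^* * a i) / ((qnorm (z i))%:C * (qnorm (a i))%:C)).
Proof.
rewrite /cdot mxE.
under [in LHS]eq_bigr => k _ do rewrite !mxE rmorph_prod -big_split /=.
rewrite (sum_binary_digits_prod (fun i b => (qubit_amp (z i) b)^* * qubit_amp (a i) b)).
by apply: eq_bigr => i _; rewrite qubit_amp_cdot.
Qed.

Lemma pistate_unit n (z : 'I_n -> C) : cdot (pistate z) (pistate z) = 1.
Proof.
rewrite pistate_cdot; apply: big1 => i _.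
by rewrite qnormC_sqr [(z i)^* * _]mulrC divff // -qnormC_sqr mulf_neq0 ?qnormC_neq0.
Qed.

Lemma cabs2_pistate_cdot n (z a : 'I_n -> C) :
  cabs2 (cdot (pistate z) (pistate a)) =
  \prod_i (cabs2 (1 + (z i)^* * a i) / ((1 + cabs2 (z i)) * (1 + cabs2 (a i)))).
Proof.
rewrite pistate_cdot cabs2_prod; apply: eq_bigr => i _.
rewrite cabs2M cabs2V cabs2M !cabs2_real !sqr_sqrtr //.
  by have := cabs2_ge0 (a i); lra.
by have := cabs2_ge0 (z i); lra.
Qed.

Lemma qubit_fidelity_bound z a : 1 + z^* * a != 0 ->
  let p := cabs2 (1 + z^* * a) / ((1 + cabs2 z) * (1 + cabs2 a)) in
  0 <= p <= 1 /\ 1 - p <= cabs2 ((z - a) / (1 + z^* * a)).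
Proof.
move=> pole_free p; rewrite /p -cabs2_1DconjM_add_sub cabs2M cabs2V.
have A_gt0 : 0 < cabs2 (1 + z^* * a) by rewrite lt_def cabs2_eq0 pole_free cabs2_ge0.
have B_ge0 := cabs2_ge0 (z - a).
set A := cabs2 (1 + z^* * a) in A_gt0 *; set B := cabs2 (z - a) in B_ge0 *.
have AB_gt0 : 0 < A + B by lra.
split.
  apply/andP; split; first by apply: divr_ge0; lra.
  by rewrite ler_pdivrMr // mul1r; lra.
have -> : 1 - A / (A + B) = B / (A + B) by field; lra.
by apply: ler_wpM2l => //; rewrite lef_pV2 ?posrE //; lra.
Qed.

Lemma fidelity_pistate_bound n (z a : 'I_n -> C) :
  (forall i, 1 + (z i)^* * a i != 0) ->
  1 - cabs2 (cdot (pistate z) (pistate a)) <=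
  \sum_i cabs2 ((z i - a i) / (1 + (z i)^* * a i)).
Proof.
move=> pole_free; rewrite cabs2_pistate_cdot.
by apply: one_sub_prod_le_sum => i; have [] := qubit_fidelity_bound (pole_free i).
Qed.

End ProductStates.

Theorem corollary3p7 (R : realType) (n : nat) (z a : 'I_n -> R[i]) :
  let D := proj_of (pistate z) - proj_of (pistate a) in
  2^-1 * tracenorm D = opnorm D /\ ((opnorm D)%:E <= dtan z a)%E.
Proof.
move=> D; have unit_z := pistate_unit z; have unit_a := pistate_unit a.
rewrite /D (tracenorm_proj_diff unit_z unit_a) (opnorm_proj_diff unit_z unit_a).
split; first by rewrite mulrA mulVf ?mul1r ?pnatr_eq0.
rewrite /dtan; case: ifPn => [_|no_pole]; first exact: leey.
rewrite lee_fin ler_sqrt; last by apply: sumr_ge0 => i _; apply: cabs2_ge0.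
apply: fidelity_pistate_bound => i.
by apply: contraNN no_pole => pole; apply/existsP; exists i.
Qed.
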